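(* Let $G=(V,E)$ be a graph and $\mathbb{F}$ a field. Suppose there exist a proper coloring $c:V\to[m]$ of $G$ with locality $\ell$ and $m$ vectors in $\mathbb{F}^t$ such that every $\ell$ of them are linearly independent over $\mathbb{F}$. Then $\mathrm{minrk}_{\mathbb{F}}(\overline{G})\le t$.
   Context: $\overline{G}$ is the complement of $G$. The locality of a proper coloring is the maximum over vertices $v$ of the number of distinct colors on $\{v\}\cup N(v)$. For a graph $H$ on $[n]$, a matrix $M\in\mathbb{F}^{n\times n}$ represents $H$ if $M_{i,i}\ne0$ for all $i$ and $M_{i,j}=0$ for distinct non-adjacent $i,j$; $\mathrm{minrk}_{\mathbb{F}}(H)$ is the minimum rank of such a matrix. *)

From mathcomp Require Import all_boot all_order all_algebra.
From Stdlib Require Import ClassicalEpsilon.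
Set Implicit Arguments. Unset Strict Implicit. Unset Printing Implicit Defensive.
Import GRing.Theory.
Local Open Scope ring_scope.

Definition simple_graph (n : nat) (e : rel 'I_n) : Prop :=
  symmetric e /\ irreflexive e.

Definition compl_graph (n : nat) (e : rel 'I_n) : rel 'I_n :=
  fun i j => (i != j) && ~~ e i j.

Definition proper_coloring (n m : nat) (e : rel 'I_n) (c : 'I_n -> 'I_m) : Prop :=
  forall u v, e u v -> c u != c v.

Definition closed_nbhd (n : nat) (e : rel 'I_n) (v : 'I_n) : {set 'I_n} :=
  v |: [set u | e v u].

Definition locality (n m : nat) (e : rel 'I_n) (c : 'I_n -> 'I_m) : nat :=
  (\max_(v : 'I_n) #|c @: closed_nbhd e v|)%N.

Definition every_l_independent (F : fieldType) (t m l : nat)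
    (u : 'I_m -> 'rV[F]_t) : Prop :=
  forall S : {set 'I_m}, #|S| = l ->
    forall a : 'I_m -> F, \sum_(i in S) a i *: u i = 0 ->
      forall i, i \in S -> a i = 0.

Definition represents (F : fieldType) (n : nat) (H : rel 'I_n) (M : 'M[F]_n) : Prop :=
  (forall i, M i i != 0) /\ (forall i j, i != j -> ~~ H i j -> M i j = 0).

Definition has_rep_of_rank (F : fieldType) (n : nat) (H : rel 'I_n) (r : nat) : bool :=
  if excluded_middle_informative
       (exists M : 'M[F]_n, represents H M /\ \rank M = r) then true else false.

Lemma represents_exists (F : fieldType) (n : nat) (H : rel 'I_n) :
  exists r : nat, has_rep_of_rank F H r.
Proof.
exists (\rank (1%:M : 'M[F]_n)); rewrite /has_rep_of_rank.
case: excluded_middle_informative => // [[]]; exists 1%:M; split=> //; split.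
- by move=> i; rewrite mxE eqxx oner_eq0.
- by move=> i j /negbTE ij _; rewrite mxE ij.
Qed.

Definition minrk (F : fieldType) (n : nat) (H : rel 'I_n) : nat :=
  ex_minn (@represents_exists F n H).

From mathcomp Require Import all_boot all_order all_algebra.
From mathcomp Require Import zify.
From Stdlib Require Import ClassicalEpsilon.
Set Implicit Arguments. Unset Strict Implicit. Unset Printing Implicit Defensive.
Import GRing.Theory.
Local Open Scope ring_scope.

(* Give vertex v a vector u_(c v) and a functional w_v that is nonzero on
   u_(c v) and vanishes on the vectors of the colors of the neighbours of v.
   Such w_v exists because the closed neighbourhood of v sees at most l colors,
   so u_(c v) lies outside the span of the other (at most l - 1) colors'
   vectors; properness ensures c v is not among them.  The matrix
   M v x := u_(c x) w_v then represents the complement of G and factors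
   through F^t. *)

Lemma superset_of_card (T : finType) (l : nat) (A : {set T}) :
  (#|A| <= l <= #|T|)%N -> exists2 B : {set T}, A \subset B & #|B| = l.
Proof.
case/andP=> leAl lelT.
have : (l - #|A| <= #|~: A|)%N by rewrite cardsCs; lia.
case/card_geqP=> s [uniq_s size_s sub_s].
exists (A :|: [set:: s]); first exact: subsetUl.
have disjAs : A :&: [set:: s] = set0.
  apply/setP=> x; rewrite !inE; apply/andP=> -[xA xs].
  by move: (sub_s x xs); rewrite inE xA.
by rewrite cardsU disjAs cards0 subn0 cardsE (card_uniqP uniq_s) size_s; lia.
Qed.

Lemma every_l_independent_notin_span (F : fieldType) (t m l : nat)
    (u : 'I_m -> 'rV[F]_t) (T : {set 'I_m}) (k : 'I_m) :
  every_l_independent l u -> (l <= m)%N -> k \notin T -> (#|k |: T| <= l)%N ->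
  ~~ (u k <= \sum_(j in T) <<u j>>)%MS.
Proof.
move=> indep lelm kNT card_kT; apply/negP=> /sub_sums_genmxP [a def_uk].
have [S sub_kTS card_S] : exists2 S : {set 'I_m}, k |: T \subset S & #|S| = l.
  by apply: superset_of_card; rewrite card_kT card_ord.
pose b j := if j == k then 1 else if j \in T then - a j 0 0 else 0.
have kS : k \in S by apply: (subsetP sub_kTS); rewrite setU11.
suff dep : \sum_(j in S) b j *: u j = 0.
  by move: (indep S card_S b dep k kS); rewrite /b eqxx => /eqP; rewrite oner_eq0.
rewrite (bigD1 k) //= {1}/b eqxx scale1r (bigID (mem T)) /=.
rewrite [X in _ + (_ + X)]big1 ?addr0; last first.
  by move=> j /andP[/andP[_ /negbTE jk] /negbTE jT]; rewrite /b jk jT scale0r.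
rewrite (eq_bigl (mem T)) => [|j]; last first.
  case jT: (j \in T); rewrite ?andbF // andbT (subsetP sub_kTS) ?inE ?jT ?orbT //=.
  by apply: contraNneq kNT => <-.
rewrite def_uk -big_split big1 //= => j jT.
have /negbTE jk : j != k by apply: contraNneq kNT => <-.
by rewrite /b jk jT scaleNr -mul_scalar_mx -mx11_scalar subrr.
Qed.

Lemma notin_submx_separating_col (F : fieldType) (k t : nat)
    (v : 'rV[F]_t) (U : 'M_(k, t)) :
  ~~ (v <= U)%MS ->
  exists w : 'cV_t, (v *m w) 0 0 != 0 /\ forall x : 'rV_t, (x <= U)%MS -> x *m w = 0.
Proof.
rewrite submxE => vNU.
have [j vUj] : exists j, (v *m cokermx U) 0 j != 0.
  apply/existsP; apply: contraR vNU => /existsPn vU0.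
  by apply/eqP/matrixP => i j; rewrite (ord1 i) [RHS]mxE; apply/eqP/negbNE.
exists (col j (cokermx U)); split; first by rewrite colE mulmxA -colE mxE.
by move=> x; rewrite submxE => /eqP xU0; rewrite colE mulmxA xU0 mul0mx.
Qed.

Lemma minrk_le_rank (F : fieldType) (n : nat) (H : rel 'I_n) (M : 'M[F]_n) :
  represents H M -> (minrk F H <= \rank M)%N.
Proof.
move=> repM; rewrite /minrk; case: ex_minnP => r _; apply.
rewrite /has_rep_of_rank; case: excluded_middle_informative => // -[].
by exists M.
Qed.

Lemma minrk_compl_le (F : fieldType) (n t : nat) (e : rel 'I_n)
    (x : 'I_n -> 'rV[F]_t) (w : 'I_n -> 'cV[F]_t) :
  (forall v, (x v *m w v) 0 0 != 0) ->
  (forall v y, e v y -> x y *m w v = 0) ->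
  (minrk F (compl_graph e) <= t)%N.
Proof.
move=> diag_nz edge_0.
pose W := \matrix_(v < n, k < t) w v k 0.
pose X := \matrix_(k < t, y < n) x y 0 k.
have WXE v y : (W *m X) v y = (x y *m w v) 0 0.
  by rewrite !mxE; apply: eq_bigr => k _; rewrite !mxE mulrC.
have repWX : represents (compl_graph e) (W *m X).
  split=> [v | v y vy]; rewrite WXE // /compl_graph vy negbK => evy.
  by rewrite edge_0 // mxE.
exact: leq_trans (minrk_le_rank repWX) (leq_trans (mxrankM_maxl _ _) (rank_leq_col _)).
Qed.

Section Locality.

Variables (n m : nat) (e : rel 'I_n) (c : 'I_n -> 'I_m).

Lemma card_nbhd_colors_le_locality (v : 'I_n) :
  (#|c @: closed_nbhd e v| <= locality e c)%N.
Proof. exact: leq_bigmax. Qed.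

Lemma locality_le_colors : (locality e c <= m)%N.
Proof. by apply/bigmax_leqP => v _; rewrite -[leqRHS]card_ord max_card. Qed.

Lemma proper_coloring_notin_nbhd_colors (v : 'I_n) :
  proper_coloring e c -> c v \notin c @: [set y | e v y].
Proof.
move=> proper_c; apply/imsetP => -[y]; rewrite inE => evy cvy.
by move: (proper_c v y evy); rewrite cvy eqxx.
Qed.

End Locality.

Theorem mainTheorem10 (F : fieldType) (n m l t : nat) (e : rel 'I_n)
  (c : 'I_n -> 'I_m) (u : 'I_m -> 'rV[F]_t) :
  simple_graph e ->
  proper_coloring e c ->
  locality e c = l ->
  @every_l_independent F t m l u ->
  (minrk F (compl_graph e) <= t)%N.
Proof.
move=> _ proper_c loc_c indep.
pose nbhd_span v := (\sum_(k in c @: [set y | e v y]) <<u k>>)%MS.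
have separating v : exists w : 'cV_t, (u (c v) *m w) 0 0 != 0 /\
    forall x : 'rV_t, (x <= nbhd_span v)%MS -> x *m w = 0.
  apply/notin_submx_separating_col/(every_l_independent_notin_span indep).
  - by rewrite -loc_c locality_le_colors.
  - exact: proper_coloring_notin_nbhd_colors.
  - by rewrite -loc_c -imsetU1; exact: card_nbhd_colors_le_locality.
have [w w_sep] := fin_all_exists separating.
apply: (minrk_compl_le (x := u \o c) (w := w)) => [v | v y evy]; first by case: (w_sep v).
case: (w_sep v) => _; apply; rewrite (sumsmx_sup (c y)) ?genmxE //.
by apply/imsetP; exists y; rewrite ?inE.
Qed.
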